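(* Consider the robust dynamic pricing problem with valuation $v^\star\in[0,1]$, horizon $T$, and at most $C$ corrupted feedback observations. If $C$ is known to the learner, then there exists a pricing algorithm with regret \[ R_T\le\mathcal O(C+\log T), \] with a hidden constant independent of $T$, $C$, $v^\star$ and the adversary.
   Context: Robust dynamic pricing: there are $T$ rounds and an unknown valuation $v^\star$. At each round $t$ the seller posts a price $p_t\in[0,1]$ (based on past observations). The true sale indicator is $y_t=\mathbbm 1\{p_t\le v^\star\}$; the seller observes $\sigma_t\in\{0,1\}$, and at most $C$ rounds are corrupted: $|\{t\in[T]:\sigma_t\neq y_t\}|\le C$, where on corrupted rounds $\sigma_t$ may be chosen adversarially. Revenue is $r_t=p_t\,\mathbbm 1\{p_t\le v^\star\}$ and regret is $R_T=Tv^\star-\sum_{t=1}^T r_t$. $\log$ is base $2$. *)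

From Stdlib Require Import Reals Lra Lia List Bool.
Open Scope R_scope.

(* Rounds are indexed t = 0, ..., T-1.  A (deterministic) pricing algorithm
   maps the history of observed feedback bits sigma_0 .. sigma_{t-1}
   (in chronological order) to the price posted at round t. *)
Definition algorithm := list bool -> R.

Definition sale (p v : R) : bool := if Rle_dec p v then true else false.

Definition hist (sigma : nat -> bool) (t : nat) : list bool :=
  map sigma (seq 0 t).

Definition price (alg : algorithm) (sigma : nat -> bool) (t : nat) : R :=
  alg (hist sigma t).

Fixpoint num_corrupt (alg : algorithm) (v : R) (sigma : nat -> bool) (T : nat)
  : nat :=
  match T with
  | O => O
  | S n => (num_corrupt alg v sigma n +
            (if Bool.eqb (sigma n) (sale (price alg sigma n) v) then 0 else 1))%nat
  end.

Fixpoint revenue (alg : algorithm) (v : R) (sigma : nat -> bool) (T : nat) : R :=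
  match T with
  | O => 0
  | S n => revenue alg v sigma n +
           (if sale (price alg sigma n) v then price alg sigma n else 0)
  end.

Definition regret (alg : algorithm) (v : R) (sigma : nat -> bool) (T : nat) : R :=
  INR T * v - revenue alg v sigma T.

Definition log2 (x : R) : R := ln x / ln 2.

(* Prices are restricted to the grid k / 2^D with D = ceil(log T), so posting the
   grid point just below v loses at most 2^-D <= 1/T per round.  The seller runs a
   binary search over the dyadic tree of grid intervals that verifies before it
   descends: at a node it checks that the left end sells and the right end does not,
   then queries the midpoint and moves to the corresponding child; a failed check
   sends it back to the parent.  At a leaf it keeps posting the left end once the
   right end has been rejected C + 1 times, which an adversary with C corruptions
   cannot fake.  A potential worth 3 per level of the true path still to descend,
   2 per rejection still needed to certify the true leaf, plus a bonus bounding the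
   rounds needed to climb out of a wrong subtree, drops by 1 in every round that
   does not post a near-optimal selling price and grows by at most 5 in a corrupted
   round.  It starts at O(D + C) and is bounded below, so the regret is
   O(C + D) + T / 2^D = O(C + log T). *)

From Stdlib Require Import Reals Lra Lia List Bool ZArith.
Open Scope R_scope.
Import ListNotations.

Section BacktrackingSearch.
Variables D C : nat.

Inductive phase := CheckLeft | CheckRight | Descend.
Record state := State { node : list bool; stage : phase; rejections : nat -> nat }.

Definition grid : nat := 2 ^ D.
Definition grid_price (k : nat) : R := INR k / INR grid.

(* A node is the list of branching bits from the root, deepest bit first; it
   stands for the grid interval [left_end p, right_end p]. *)
Fixpoint left_end (p : list bool) : nat :=
  match p with
  | [] => 0
  | b :: q => left_end q + (if b then 2 ^ (D - S (length q)) else 0)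
  end%nat.
Definition width (p : list bool) : nat := 2 ^ (D - length p).
Definition right_end (p : list bool) : nat := left_end p + width p.
Definition midpoint (p : list bool) : nat := left_end p + 2 ^ (D - S (length p)).

Definition posted_index (s : state) : nat :=
  match stage s with
  | CheckLeft => left_end (node s)
  | CheckRight => right_end (node s)
  | Descend => midpoint (node s)
  end.
Definition posted_price (s : state) : R := grid_price (posted_index s).

Definition bump (c : nat -> nat) (k : nat) : nat -> nat :=
  fun j => if Nat.eqb j k then S (c j) else c j.

(* A right end equal to [grid] is the price 1, which sells when v = 1 even if v
   lies in the node, so it is never tested. *)
Definition step (s : state) (sold : bool) : state :=
  let p := node s in
  let c := rejections s in
  let leaf := (D <=? length p)%nat in
  match stage s with
  | CheckLeft =>
      if sold then
        if leaf && ((grid <=? right_end p) || (S C <=? c (right_end p)))%nat then s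
        else State p CheckRight c
      else State (tl p) CheckLeft c
  | CheckRight =>
      if (grid <=? right_end p)%nat then State p (if leaf then CheckLeft else Descend) c
      else if sold then State (tl p) CheckLeft c
      else if leaf then State p CheckLeft (bump c (right_end p))
      else State p Descend c
  | Descend => if leaf then State p CheckLeft c else State (sold :: p) CheckLeft c
  end.

Definition start : state := State [] CheckLeft (fun _ => 0%nat).
Definition run (h : list bool) : state := fold_left step h start.
Definition search_pricing : algorithm := fun h => posted_price (run h).

Lemma pow2_halve l : (l < D)%nat -> (2 ^ (D - l) = 2 * 2 ^ (D - S l))%nat.
Proof. intro H. replace (D - l)%nat with (S (D - S l)) by lia. reflexivity. Qed.

Lemma interval_nested s q : (length (s ++ q) <= D)%nat ->
  (left_end q <= left_end (s ++ q))%nat /\ (right_end (s ++ q) <= right_end q)%nat.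
Proof.
  induction s as [|b s IH]; cbn [app length left_end]; intro H; [lia|].
  destruct IH as [IHl IHr]; [lia|]. unfold right_end, width in *. cbn [length].
  rewrite (pow2_halve (length (s ++ q))) in IHr by lia.
  destruct b; cbn [left_end]; lia.
Qed.

Lemma right_end_le_grid p : (length p <= D)%nat -> (left_end p <= right_end p <= grid)%nat.
Proof.
  intro H. destruct (interval_nested p []) as [_ Hr]; rewrite app_nil_r in *; [exact H|].
  unfold right_end, width, grid in *. cbn in Hr. rewrite Nat.sub_0_r in Hr. lia.
Qed.

Lemma midpoint_le_right_end p : (midpoint p <= right_end p)%nat.
Proof.
  unfold midpoint, right_end, width.
  enough (2 ^ (D - S (length p)) <= 2 ^ (D - length p))%nat by lia.
  apply Nat.pow_le_mono_r; lia.
Qed.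

Lemma grid_pos : (0 < grid)%nat.
Proof. apply Nat.neq_0_lt_0, Nat.pow_nonzero. lia. Qed.

Lemma step_depth s sold : (length (node s) <= D)%nat -> (length (node (step s sold)) <= D)%nat.
Proof.
  destruct s as [p f c]; unfold step; cbn [node stage rejections]; intro H.
  destruct f, sold; destruct (Nat.leb_spec D (length p));
    repeat match goal with |- context [if ?b then _ else _] => destruct b end;
    cbn [node length andb]; rewrite ?length_tl; lia.
Qed.

Lemma run_depth h : (length (node (run h)) <= D)%nat.
Proof.
  unfold run. generalize start (le_0_n D : (length (node start) <= D)%nat).
  induction h as [|b h IH]; intros s Hs; [exact Hs|]. apply IH, step_depth, Hs.
Qed.

Lemma run_snoc sigma t : run (hist sigma (S t)) = step (run (hist sigma t)) (sigma t).
Proof. unfold run, hist. rewrite seq_S, map_app, fold_left_app. reflexivity. Qed.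

Lemma grid_price_le k l : (k <= l)%nat -> grid_price k <= grid_price l.
Proof.
  intro H. unfold grid_price, Rdiv. apply Rmult_le_compat_r, le_INR, H.
  left. apply Rinv_0_lt_compat, lt_0_INR, grid_pos.
Qed.

Lemma grid_price_succ k : grid_price (S k) = grid_price k + / INR grid.
Proof.
  unfold grid_price. rewrite S_INR. field. apply not_0_INR. pose proof grid_pos. lia.
Qed.

Lemma grid_price_grid : grid_price grid = 1.
Proof. unfold grid_price. field. apply not_0_INR. pose proof grid_pos. lia. Qed.

Lemma posted_price_unit s : (length (node s) <= D)%nat -> 0 <= posted_price s <= 1.
Proof.
  intro H. pose proof (right_end_le_grid _ H). pose proof (midpoint_le_right_end (node s)).
  split.
  - unfold posted_price, grid_price, Rdiv. apply Rmult_le_pos; [apply pos_INR|].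
    left. apply Rinv_0_lt_compat, lt_0_INR, grid_pos.
  - rewrite <- grid_price_grid. apply grid_price_le.
    unfold posted_index. destruct (stage s); lia.
Qed.

Variable v : R.
Hypothesis v_unit : 0 <= v <= 1.

Lemma sale_true_iff p : sale p v = true <-> p <= v.
Proof. unfold sale. destruct (Rle_dec p v); split; auto; discriminate. Qed.

Lemma sale_false_iff p : sale p v = false <-> v < p.
Proof. unfold sale. destruct (Rle_dec p v); split; intro; try discriminate; lra. Qed.

Fixpoint true_path (d : nat) : list bool :=
  match d with
  | O => []
  | S d' => sale (grid_price (midpoint (true_path d'))) v :: true_path d'
  end.
Definition true_bit (d : nat) : bool := sale (grid_price (midpoint (true_path d))) v.

Lemma length_true_path d : length (true_path d) = d.
Proof. induction d; cbn; auto. Qed.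

Lemma true_path_brackets d : (d <= D)%nat ->
  grid_price (left_end (true_path d)) <= v /\
  ((grid <= right_end (true_path d))%nat \/ v < grid_price (right_end (true_path d))).
Proof.
  induction d as [|d IH]; intro H.
  - unfold grid_price, right_end, width, grid; cbn. rewrite Nat.sub_0_r. split; [|lia].
    unfold Rdiv. rewrite Rmult_0_l. lra.
  - destruct IH as [IHl IHr]; [lia|].
    pose proof (pow2_halve d ltac:(lia)) as Hhalf.
    unfold right_end, width, midpoint in *; cbn [true_path left_end length] in *.
    rewrite length_true_path in *.
    destruct (sale _ v) eqn:Hsale;
      unfold midpoint in Hsale; rewrite length_true_path in Hsale.
    + apply sale_true_iff in Hsale. split; [exact Hsale|].
      replace (left_end (true_path d) + 2 ^ (D - S d) + 2 ^ (D - S d))%nat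
        with (left_end (true_path d) + 2 ^ (D - d))%nat by lia.
      exact IHr.
    + apply sale_false_iff in Hsale. rewrite Nat.add_0_r. auto.
Qed.

(* [deviation p = Some (t, e)]: the first wrong turn of [p] went in direction [t]
   and has [e - 1] bits of [p] below it. *)
Fixpoint deviation (p : list bool) : option (bool * nat) :=
  match p with
  | [] => None
  | b :: q =>
      match deviation q with
      | None => if Bool.eqb b (true_bit (length q)) then None else Some (b, 1%nat)
      | Some (t, e) => Some (t, S e)
      end
  end.

Lemma deviation_none p : deviation p = None -> p = true_path (length p).
Proof.
  induction p as [|b q IH]; cbn; auto.
  destruct (deviation q) as [[t e]|]; [discriminate|].
  destruct (Bool.eqb b (true_bit (length q))) eqn:E; [|discriminate].
  intros _. apply Bool.eqb_prop in E. subst b. rewrite (IH eq_refl) at 2. reflexivity.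
Qed.

Lemma deviation_some p t e : deviation p = Some (t, e) ->
  (1 <= e <= length p)%nat /\
  exists s, p = s ++ t :: true_path (length p - e) /\ t = negb (true_bit (length p - e)).
Proof.
  revert t e. induction p as [|b q IH]; cbn; intros t e H; [discriminate|].
  destruct (deviation q) as [[t' e']|] eqn:Hq.
  - injection H as <- <-. destruct (IH t' e' eq_refl) as [He [s [Hs Ht]]].
    split; [lia|]. exists (b :: s).
    replace (S (length q) - S e')%nat with (length q - e')%nat by lia.
    rewrite Hs at 1. auto.
  - destruct (Bool.eqb b (true_bit (length q))) eqn:E; [discriminate|].
    injection H as <- <-. split; [lia|]. exists [].
    rewrite Nat.sub_0_r, <- (deviation_none q Hq). split; [reflexivity|].
    destruct b, (true_bit (length q)); auto; discriminate.
Qed.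

Lemma deviation_tl p t e : deviation p = Some (t, e) ->
  deviation (tl p) = (if Nat.eqb e 1 then None else Some (t, pred e)) /\
  length (tl p) = pred (length p).
Proof.
  destruct p as [|b q]; cbn; [discriminate|].
  destruct (deviation q) as [[t' e']|] eqn:Hq.
  - intro H; injection H as <- <-. destruct (deviation_some _ _ _ Hq) as [He _].
    destruct (Nat.eqb_spec (S e') 1); [lia|]. auto.
  - destruct (Bool.eqb b (true_bit (length q))); [discriminate|].
    intro H; injection H as <- <-. auto.
Qed.

Lemma deviation_none_tl p : deviation p = None -> deviation (tl p) = None.
Proof.
  destruct p as [|b q]; cbn; auto.
  destruct (deviation q) as [[t e]|]; [discriminate|]. auto.
Qed.

Lemma wrong_right_above p e : (length p <= D)%nat -> deviation p = Some (true, e) ->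
  v < grid_price (left_end p).
Proof.
  intros HD Hdev. destruct (deviation_some _ _ _ Hdev) as [He [s [Hp Hb]]].
  set (g := (length p - e)%nat) in *.
  assert (Hmid : v < grid_price (midpoint (true_path g))).
  { apply sale_false_iff. unfold true_bit in Hb. destruct (sale _ v); auto. }
  eapply Rlt_le_trans; [exact Hmid|]. apply grid_price_le.
  rewrite Hp in HD |- *. destruct (interval_nested s (true :: true_path g) HD) as [Hl _].
  unfold midpoint. cbn [left_end length] in Hl. rewrite length_true_path in *. exact Hl.
Qed.

Lemma wrong_left_below p e : (length p <= D)%nat -> deviation p = Some (false, e) ->
  (right_end p < grid)%nat /\ grid_price (right_end p) <= v.
Proof.
  intros HD Hdev. destruct (deviation_some _ _ _ Hdev) as [He [s [Hp Hb]]].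
  set (g := (length p - e)%nat) in *.
  assert (Hmid : grid_price (midpoint (true_path g)) <= v).
  { apply sale_true_iff. unfold true_bit in Hb. destruct (sale _ v); auto. }
  assert (Hg : (g < D)%nat) by (unfold g; lia).
  pose proof (right_end_le_grid (true_path g)) as Hgrid.
  rewrite length_true_path in Hgrid. specialize (Hgrid ltac:(lia)).
  assert (HD' := HD). rewrite Hp in HD'.
  destruct (interval_nested s (false :: true_path g) HD') as [_ Hr]. rewrite <- Hp in Hr.
  pose proof (pow2_halve g Hg) as Hhalf.
  pose proof (Nat.pow_nonzero 2 (D - S g) ltac:(lia)).
  unfold right_end, width, midpoint in *. cbn [left_end length] in Hr.
  rewrite length_true_path in *. split; [lia|].
  eapply Rle_trans; [|exact Hmid]. apply grid_price_le. lia.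
Qed.

Definition true_right : nat := right_end (true_path D).

Definition certs_left (c : nat -> nat) : nat :=
  if (grid <=? true_right)%nat then 0 else (S C - c true_right)%nat.

Definition correct_depth (dev : option (bool * nat)) (d : nat) : nat :=
  match dev with None => d | Some (_, e) => (d - e)%nat end.

Open Scope Z_scope.
(* Climbing out of a wrong subtree takes one round per level after a wrong right
   turn (the left end does not sell) and two after a wrong left turn (the left end
   sells, then the right end sells). *)
Definition bonus (dev : option (bool * nat)) (leaf : bool) (f : phase) (r : nat) : Z :=
  match dev, f with
  | None, CheckLeft => 0
  | None, CheckRight => if leaf then (if Nat.eqb r 0 then 1 else -1) else -1
  | None, Descend => if leaf then 1 else -2
  | Some (true, e), CheckLeft => Z.of_nat e
  | Some (true, e), CheckRight => Z.of_nat e + 3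
  | Some (true, e), Descend => if leaf then Z.of_nat e + 1 else Z.of_nat e + 2
  | Some (false, e), CheckLeft => 2 * Z.of_nat e
  | Some (false, e), CheckRight => 2 * Z.of_nat e - 1
  | Some (false, e), Descend => if leaf then 2 * Z.of_nat e + 1 else 2 * Z.of_nat e + 3
  end.

Definition potential (s : state) : Z :=
  let p := node s in
  let r := certs_left (rejections s) in
  3 * (Z.of_nat D - Z.of_nat (correct_depth (deviation p) (length p))) + 2 * Z.of_nat r
  + bonus (deviation p) (D <=? length p)%nat (stage s) r.
Close Scope Z_scope.

Definition corrupted (s : state) (sold : bool) : nat :=
  if Bool.eqb sold (sale (posted_price s) v) then 0 else 1.

Definition round_progress (s : state) (sold : bool) : Prop :=
  (potential (step s sold) + 1 <= potential s + 5 * Z.of_nat (corrupted s sold))%Z \/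
  ((potential (step s sold) <= potential s)%Z /\
   sale (posted_price s) v = true /\ v - posted_price s <= / INR grid).

Lemma certs_left_le c : (certs_left c <= S C)%nat.
Proof. unfold certs_left. destruct (_ <=? _)%nat; lia. Qed.

Lemma certs_left_bump_true_right c : (true_right < grid)%nat ->
  certs_left (bump c true_right) = pred (certs_left c).
Proof.
  intro H. unfold certs_left, bump. rewrite Nat.eqb_refl.
  destruct (Nat.leb_spec grid true_right); lia.
Qed.

Lemma certs_left_bump_other c k : k <> true_right -> certs_left (bump c k) = certs_left c.
Proof.
  intro H. unfold certs_left, bump. destruct (Nat.eqb_spec true_right k); [congruence|reflexivity].
Qed.

Lemma right_end_leaf p : length p = D -> right_end p = S (left_end p).
Proof. intro H. unfold right_end, width. rewrite H, Nat.sub_diag, Nat.pow_0_r. lia. Qed.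

Lemma exploit_gap k : grid_price k <= v -> ((grid <= S k)%nat \/ v < grid_price (S k)) ->
  v - grid_price k <= / INR grid.
Proof.
  rewrite grid_price_succ. intros Hk [Hgrid|Hgap]; [|lra].
  apply grid_price_le in Hgrid. rewrite grid_price_grid, grid_price_succ in Hgrid. lra.
Qed.

Ltac unfold_round :=
  unfold round_progress, corrupted, posted_price, posted_index, step;
  cbn [node stage rejections].

Ltac split_conditions :=
  cbn [andb orb Bool.eqb];
  repeat (match goal with
          | |- context [Nat.leb ?a ?b] => destruct (Nat.leb_spec a b)
          | |- context [Nat.eqb ?a ?b] => destruct (Nat.eqb_spec a b)
          | |- context [if ?b then _ else _] => destruct b
          end; cbn [andb orb Bool.eqb]; cbv beta iota zeta).

Ltac potential_arith :=
  split_conditions;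
  unfold potential; cbn [node stage rejections length deviation];
  repeat match goal with
         | H : deviation _ = _ |- _ => rewrite H
         | H : certs_left _ = _ |- _ => rewrite H
         | H : true_bit _ = _ |- _ => rewrite H
         end;
  rewrite ?length_tl; unfold correct_depth, bonus;
  split_conditions; lia.

Lemma progress_on_path_leaf p f c sold : length p = D -> deviation p = None ->
  round_progress (State p f c) sold.
Proof.
  intros Hleaf Hdev.
  assert (Hp := deviation_none p Hdev). rewrite Hleaf in Hp.
  assert (Htl := deviation_none_tl p Hdev).
  assert (Hright : right_end p = true_right) by (rewrite Hp; reflexivity).
  destruct (true_path_brackets D (le_n D)) as [Hl Hr]; fold true_right in Hr.
  rewrite <- Hp in Hl. apply sale_true_iff in Hl as Hsale.
  unfold_round. rewrite Hright.
  replace (D <=? length p)%nat with true by (symmetry; apply Nat.leb_le; lia).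
  destruct f; cbn [andb].
  - rewrite Hsale. destruct sold; [|left; potential_arith].
    destruct ((grid <=? true_right) || (S C <=? c true_right))%nat eqn:Hcert.
    + right. split; [lia|]. split; [reflexivity|].
      apply exploit_gap; [exact Hl|]. rewrite <- (right_end_leaf p Hleaf), Hright. exact Hr.
    + assert (certs_left c <> 0%nat).
      { unfold certs_left. apply orb_false_iff in Hcert as [Hgrid Hfew].
        rewrite Hgrid. apply Nat.leb_gt in Hfew. lia. }
      left. potential_arith.
  - left. destruct (Nat.leb_spec grid true_right) as [Hgrid|Hgrid].
    + assert (certs_left c = 0%nat)
        by (unfold certs_left; destruct (Nat.leb_spec grid true_right); lia).
      destruct sold; potential_arith.
    + destruct Hr as [Hr|Hr]; [lia|]. apply sale_false_iff in Hr. rewrite Hr.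
      pose proof (certs_left_bump_true_right c Hgrid).
      destruct sold; potential_arith.
  - left. destruct sold; potential_arith.
Qed.

Lemma progress_on_path_internal p f c sold : (length p < D)%nat -> deviation p = None ->
  round_progress (State p f c) sold.
Proof.
  intros Hint Hdev.
  assert (Hp := deviation_none p Hdev). assert (Htl := deviation_none_tl p Hdev).
  destruct (true_path_brackets (length p) ltac:(lia)) as [Hl Hr]; rewrite <- Hp in Hl, Hr.
  apply sale_true_iff in Hl.
  assert (Hmid : sale (grid_price (midpoint p)) v = true_bit (length p))
    by (unfold true_bit; rewrite <- Hp; reflexivity).
  unfold_round. replace (D <=? length p)%nat with false by (symmetry; apply Nat.leb_gt; lia).
  left. destruct f; cbn [andb].
  - rewrite Hl. destruct sold; potential_arith.
  - destruct (Nat.leb_spec grid (right_end p)); [destruct sold; potential_arith|].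
    destruct Hr as [Hr|Hr]; [lia|]. apply sale_false_iff in Hr. rewrite Hr.
    destruct sold; potential_arith.
  - rewrite Hmid. destruct (true_bit (length p)) eqn:Hbit, sold; potential_arith.
Qed.

Lemma progress_wrong_right p e f c sold : (length p <= D)%nat -> deviation p = Some (true, e) ->
  round_progress (State p f c) sold.
Proof.
  intros HD Hdev.
  assert (Hl := wrong_right_above p e HD Hdev).
  destruct (deviation_some _ _ _ Hdev) as [He _].
  destruct (deviation_tl _ _ _ Hdev) as [Htl _].
  assert (Hbump : certs_left (bump c (right_end p)) = certs_left c).
  { apply certs_left_bump_other.
    destruct (true_path_brackets D (le_n D)) as [Htrue _].
    destruct (Nat.lt_ge_cases (left_end (true_path D)) (left_end p)) as [Hlt|Hge];
      [|apply grid_price_le in Hge; lra].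
    unfold true_right. rewrite (right_end_leaf (true_path D)) by apply length_true_path.
    unfold right_end, width. pose proof (Nat.pow_nonzero 2 (D - length p)). lia. }
  assert (Hbounds := right_end_le_grid p HD). pose proof (midpoint_le_right_end p).
  assert (Hsale : forall k, (left_end p <= k)%nat -> sale (grid_price k) v = false).
  { intros k Hk. apply sale_false_iff. eapply Rlt_le_trans; [exact Hl|]. apply grid_price_le, Hk. }
  unfold_round. left.
  destruct f; rewrite Hsale by (unfold midpoint in *; lia); destruct sold; potential_arith.
Qed.

Lemma progress_wrong_left p e f c sold : (length p <= D)%nat -> deviation p = Some (false, e) ->
  (forall j, grid_price j <= v -> (c j <= C)%nat) -> round_progress (State p f c) sold.
Proof.
  intros HD Hdev Hcnt.
  destruct (wrong_left_below p e HD Hdev) as [Hgrid Hr].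
  destruct (deviation_some _ _ _ Hdev) as [He _].
  destruct (deviation_tl _ _ _ Hdev) as [Htl _].
  assert (Hbump : certs_left (bump c (right_end p)) = certs_left c).
  { apply certs_left_bump_other. intro Heq.
    destruct (true_path_brackets D (le_n D)) as [_ [Htrue|Htrue]];
      fold true_right in Htrue; rewrite <- Heq in Htrue; lia || lra. }
  assert (Hbounds := right_end_le_grid p HD). pose proof (midpoint_le_right_end p).
  specialize (Hcnt _ Hr).
  assert (Hsale : forall k, (k <= right_end p)%nat -> sale (grid_price k) v = true).
  { intros k Hk. apply sale_true_iff. eapply Rle_trans; [|exact Hr]. apply grid_price_le, Hk. }
  unfold_round. left.
  destruct f; rewrite Hsale by (unfold midpoint in *; lia); destruct sold; potential_arith.
Qed.

Lemma round_progress_holds s sold : (length (node s) <= D)%nat ->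
  (forall j, grid_price j <= v -> (rejections s j <= C)%nat) -> round_progress s sold.
Proof.
  destruct s as [p f c]; cbn [node rejections]; intros HD Hcnt.
  destruct (deviation p) as [[[|] e]|] eqn:Hdev.
  - exact (progress_wrong_right p e f c sold HD Hdev).
  - exact (progress_wrong_left p e f c sold HD Hdev Hcnt).
  - destruct (Nat.lt_ge_cases (length p) D).
    + apply progress_on_path_internal; assumption.
    + apply progress_on_path_leaf; [lia|assumption].
Qed.

Lemma step_rejections s sold j : grid_price j <= v ->
  (rejections (step s sold) j <= rejections s j + corrupted s sold)%nat.
Proof.
  intro Hj. destruct s as [p f c]. unfold step, corrupted; cbn [node stage rejections].
  destruct f, sold; cbn [andb orb];
    repeat match goal with |- context [if ?b then _ else _] =>
      lazymatch b with Bool.eqb _ _ => fail | _ => destruct b end end;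
    cbn [rejections]; try lia.
  unfold bump. destruct (Nat.eqb_spec j (right_end p)) as [->|]; [|lia].
  unfold posted_price, posted_index; cbn [stage node].
  apply sale_true_iff in Hj. rewrite Hj. cbn. lia.
Qed.

Lemma potential_ge s : (length (node s) <= D)%nat -> (-2 <= potential s)%Z.
Proof.
  destruct s as [p f c]; cbn [node]; intro HD. unfold potential; cbn [node stage rejections].
  assert (correct_depth (deviation p) (length p) <= D)%nat
    by (unfold correct_depth; destruct (deviation p) as [[? ?]|]; lia).
  unfold bonus. destruct (deviation p) as [[[|] e]|], f; split_conditions; lia.
Qed.

Lemma potential_start : (potential start <= 3 * Z.of_nat D + 2 * Z.of_nat (S C))%Z.
Proof.
  unfold potential; cbn [start node stage rejections deviation length correct_depth bonus].
  pose proof (certs_left_le (fun _ => 0%nat)). lia.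
Qed.

Lemma round_regret s sold : (length (node s) <= D)%nat ->
  (forall j, grid_price j <= v -> (rejections s j <= C)%nat) ->
  v - (if sale (posted_price s) v then posted_price s else 0) + IZR (potential (step s sold))
  <= IZR (potential s) + 5 * INR (corrupted s sold) + / INR grid.
Proof.
  intros HD Hcnt. pose proof (posted_price_unit s HD).
  assert (0 < / INR grid) by (apply Rinv_0_lt_compat, lt_0_INR, grid_pos).
  destruct (round_progress_holds s sold HD Hcnt) as [Hdrop|[Hle [Hsale Hgap]]].
  - apply IZR_le in Hdrop. rewrite !plus_IZR, mult_IZR, <- INR_IZR_INZ in Hdrop.
    destruct (sale _ v); cbn [IZR IPR IPR_2] in Hdrop; lra.
  - rewrite Hsale. apply IZR_le in Hle. pose proof (pos_INR (corrupted s sold)). lra.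
Qed.

Lemma rejections_le_corrupt sigma t j : grid_price j <= v ->
  (rejections (run (hist sigma t)) j <= num_corrupt search_pricing v sigma t)%nat.
Proof.
  intro Hj. induction t as [|t IH]; [cbn; lia|].
  rewrite run_snoc. cbn [num_corrupt].
  pose proof (step_rejections (run (hist sigma t)) (sigma t) j Hj). unfold corrupted in *.
  change (price search_pricing sigma t) with (posted_price (run (hist sigma t))). lia.
Qed.

Lemma regret_potential_invariant sigma t : (num_corrupt search_pricing v sigma t <= C)%nat ->
  INR t * v - revenue search_pricing v sigma t + IZR (potential (run (hist sigma t)))
  <= IZR (potential start) + 5 * INR (num_corrupt search_pricing v sigma t) + INR t / INR grid.
Proof.
  induction t as [|t IH]; intro Hc.
  - cbn [INR revenue num_corrupt]. unfold Rdiv. replace (run (hist sigma 0)) with start by reflexivity. lra.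
  - rewrite run_snoc. cbn [num_corrupt revenue] in *.
    change (price search_pricing sigma t) with (posted_price (run (hist sigma t))) in *.
    assert (Hcnt : forall j, grid_price j <= v -> (rejections (run (hist sigma t)) j <= C)%nat).
    { intros j Hj. pose proof (rejections_le_corrupt sigma t j Hj). lia. }
    pose proof (round_regret _ (sigma t) (run_depth _) Hcnt). unfold corrupted in *.
    specialize (IH ltac:(lia)). rewrite S_INR, plus_INR. unfold Rdiv in *. lra.
Qed.

Lemma search_regret_le sigma T : (num_corrupt search_pricing v sigma T <= C)%nat ->
  regret search_pricing v sigma T <= 3 * INR D + 7 * INR C + 4 + INR T / INR grid.
Proof.
  intro Hc. unfold regret.
  pose proof (regret_potential_invariant sigma T Hc).
  pose proof (potential_ge _ (run_depth (hist sigma T))) as Hend.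
  pose proof potential_start as Hstart.
  apply IZR_le in Hend, Hstart. rewrite plus_IZR, !mult_IZR, <- !INR_IZR_INZ, S_INR in Hstart.
  apply le_INR in Hc. cbn [IZR IPR IPR_2] in *. lra.
Qed.

End BacktrackingSearch.

Lemma le_log2_of_pow_le (n : nat) (x : R) : 2 ^ n <= x -> INR n <= log2 x.
Proof.
  intro H. pose proof ln_lt_2 as Hln2.
  assert (Hpow : 0 < 2 ^ n) by (apply pow_lt; lra).
  unfold log2, Rdiv. apply (Rmult_le_reg_r (ln 2)); [lra|].
  rewrite Rmult_assoc, Rinv_l, Rmult_1_r, <- ln_pow by lra.
  destruct (Rle_lt_or_eq_dec _ _ H) as [Hlt|Heq]; [left; apply ln_increasing; lra|].
  rewrite Heq. lra.
Qed.

Lemma INR_pow2 n : INR (2 ^ n) = 2 ^ n.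
Proof. rewrite pow_INR. reflexivity. Qed.

Lemma log2_up_le_log2 T : (1 < T)%nat -> INR (Nat.log2_up T) <= 1 + log2 (INR T).
Proof.
  intro HT. destruct (Nat.log2_up_spec T HT) as [Hlow _].
  pose proof (Nat.log2_up_pos T HT).
  assert (Hpred : INR (pred (Nat.log2_up T)) <= log2 (INR T)).
  { apply le_log2_of_pow_le. rewrite <- INR_pow2. apply le_INR. lia. }
  replace (Nat.log2_up T) with (S (pred (Nat.log2_up T))) by lia. rewrite S_INR. lra.
Qed.

Lemma one_le_log2 T : (2 <= T)%nat -> 1 <= log2 (INR T).
Proof.
  intro HT. apply (le_log2_of_pow_le 1). rewrite <- INR_pow2. apply le_INR. exact HT.
Qed.

Lemma horizon_le_pow2_log2_up T : (1 < T)%nat -> INR T / INR (2 ^ Nat.log2_up T) <= 1.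
Proof.
  intro HT. destruct (Nat.log2_up_spec T HT) as [_ Hup].
  assert (Hpos : 0 < INR (2 ^ Nat.log2_up T)) by (apply lt_0_INR; lia).
  apply le_INR in Hup. unfold Rdiv.
  apply (Rmult_le_reg_r (INR (2 ^ Nat.log2_up T))); [exact Hpos|].
  rewrite Rmult_assoc, Rinv_l by lra. lra.
Qed.

Theorem theoremB2 :
  exists K : R, 0 < K /\
  forall (T C : nat), (2 <= T)%nat ->
  exists alg : algorithm,
    (forall h, 0 <= alg h <= 1) /\
    forall (v : R) (sigma : nat -> bool),
      0 <= v <= 1 ->
      (num_corrupt alg v sigma T <= C)%nat ->
      regret alg v sigma T <= K * (INR C + log2 (INR T)).
Proof.
  exists 11. split; [lra|]. intros T C HT.
  exists (search_pricing (Nat.log2_up T) C). split.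
  - intro h. apply posted_price_unit, run_depth.
  - intros v sigma Hv Hc.
    pose proof (search_regret_le _ _ v Hv sigma T Hc) as Hregret.
    pose proof (log2_up_le_log2 T HT).
    pose proof (one_le_log2 T HT).
    pose proof (horizon_le_pow2_log2_up T HT).
    pose proof (pos_INR C). unfold grid in Hregret. lra.
Qed.
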